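(* Let $\rho,\sigma$ be commuting quantum states on a finite-dimensional Hilbert space and $\rho',\sigma'$ commuting quantum states on a (possibly different) finite-dimensional Hilbert space, with $\sigma,\sigma'$ both full-rank. If $(\rho,\sigma)\succ(\rho',\sigma')$, then $M_{s_{\min}}(\rho'\|\sigma')\ge M_{s_{\min}}(\rho\|\sigma)$, where $$M_x(\rho\|\sigma):=V(\rho\|\sigma)+\left(\frac{1}{\ln 2}-\log(x)-S(\rho\|\sigma)\right)^2$$ and $s_{\min}$ denotes the smallest eigenvalue of $\sigma$.
   Context: Logs are base 2 unless written $\ln$. $S(\rho\|\sigma)=\mathrm{Tr}(\rho(\log\rho-\log\sigma))$, $V(\rho\|\sigma)=\mathrm{Tr}(\rho(\log\rho-\log\sigma)^2)-S(\rho\|\sigma)^2$. $(\rho,\sigma)\succ(\rho',\sigma')$ means there is a quantum channel $\mathcal E$ with $\mathcal E(\rho)=\rho'$ and $\mathcal E(\sigma)=\sigma'$. *)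

From HB Require Import structures.
From mathcomp Require Import all_boot all_order all_algebra.
From mathcomp Require Import complex.
From mathcomp Require Import reals exp.

Set Implicit Arguments.
Unset Strict Implicit.
Unset Printing Implicit Defensive.

Import Order.TTheory GRing.Theory Num.Theory.
Local Open Scope ring_scope.
Local Open Scope complex_scope.

Section QInfo.
Variable R : realType.
Local Notation C := R[i].

Definition adj m n (A : 'M[C]_(m, n)) : 'M[C]_(n, m) := (map_mx Num.conj A)^T.

Definition hermitian n (A : 'M[C]_n) : Prop := adj A = A.

Definition psd n (A : 'M[C]_n) : Prop :=
  hermitian A /\ forall v : 'rV[C]_n, 0 <= (v *m A *m adj v) 0 0.

Definition is_state n (A : 'M[C]_n) : Prop := psd A /\ \tr A = 1.

Definition full_rank n (A : 'M[C]_n) : Prop := \rank A = n.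

Definition mxcommute n (A B : 'M[C]_n) : Prop := A *m B = B *m A.

Definition kraus_channel n m (Ks : seq 'M[C]_(m, n)) (X : 'M[C]_n) : 'M[C]_m :=
  \sum_(K <- Ks) (K *m X *m adj K).

Definition is_kraus n m (Ks : seq 'M[C]_(m, n)) : Prop :=
  \sum_(K <- Ks) (adj K *m K) = 1%:M.

Definition majorizes n m (rho sigma : 'M[C]_n) (rho' sigma' : 'M[C]_m) : Prop :=
  exists Ks : seq 'M[C]_(m, n), is_kraus Ks /\
    kraus_channel Ks rho = rho' /\ kraus_channel Ks sigma = sigma'.

Definition mxfun (f : R -> R) n (A : 'M[C]_n) : 'M[C]_n :=
  invmx (spectralmx A) *m
  diag_mx (map_mx (fun z : C => (f (complex.Re z))%:C) (spectral_diag A)) *m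
  spectralmx A.

(* logarithm base 2 (ln is mathcomp-analysis' natural log; ln 0 = 0, so the
   matrix log of a PSD matrix is taken on its support) *)
Definition log2 (x : R) : R := ln x / ln 2.

Definition logm n (A : 'M[C]_n) : 'M[C]_n := mxfun log2 A.

Definition relent n (rho sigma : 'M[C]_n) : R :=
  complex.Re (\tr (rho *m (logm rho - logm sigma))).

Definition relvar n (rho sigma : 'M[C]_n) : R :=
  let L := logm rho - logm sigma in
  complex.Re (\tr (rho *m (L *m L))) - relent rho sigma ^+ 2.

Definition Mx (x : R) n (rho sigma : 'M[C]_n) : R :=
  relvar rho sigma + (1 / ln 2 - log2 x - relent rho sigma) ^+ 2.

Definition min_eigenvalue n (A : 'M[C]_n) (s : R) : Prop :=
  eigenvalue A (s%:C) /\ forall l : C, eigenvalue A l -> s%:C <= l.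

End QInfo.

From HB Require Import structures.
From mathcomp Require Import all_boot all_order all_algebra.
From mathcomp Require Import complex.
From mathcomp Require Import reals exp.
From mathcomp Require Import spectral.
From mathcomp Require Import normedtype sequences derive realfun.
From mathcomp Require Import ring lra.

Import Order.TTheory GRing.Theory Num.Theory.
Local Open Scope ring_scope.
Local Open Scope complex_scope.

Set Implicit Arguments.
Unset Strict Implicit.
Unset Printing Implicit Defensive.

(* Each pair of commuting states is diagonal in one orthonormal eigenbasis (the
   rows of unitaries P and Q), so the pairs reduce to probability vectors (p, q)
   and (p', q'), and the channel acts on them by the column-stochastic matrix
   W j i = \sum_K |(Q K P^* ) j i|^2 (trace preservation gives the column sums).
   In these coordinates (ln 2)^2 M_x = \sum_i p_i (ln (x p_i / q_i) - 1)^2, a sum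
   of values of a 1-homogeneous function f (p, q) which is concave on the cone
   x p <= q.  For x = s_min every pair (p_i, q_i) lies in that cone (p_i <= 1 <=
   q_i / s_min), and homogeneity plus concavity give
   \sum_i f (p_i, q_i) <= \sum_j f ((W p)_j, (W q)_j).  Concavity is the
   tangent-plane inequality, which reduces to y^2 <= 2 (1 - L) (e^y - 1 - y)
   for L <= 0 and L <= y. *)

Section ExpRemainder.
Import numFieldNormedType.Exports.
Variable R : realType.

Lemma sqr_le_expR_rem (y : R) : 0 <= y -> y ^+ 2 <= 2 * (expR y - 1 - y).
Proof.
move=> y0.
pose f (x : R) := 2 * (expR x - 1 - x) - x ^+ 2.
pose df (x : R) := 2 * (expR x - 1 - x).
have f'E x : is_derive x (1 : R) f (df x).
  by apply: is_derive_eq; rewrite /GRing.scale /= !mulr1 subr0 /df; lra.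
have [c _ fyE] := MVT_segment y0 (fun x _ => f'E x)
  (derivable_within_continuous (fun x _ => @ex_derive _ _ _ _ _ _ _ (f'E x))).
have : 0 <= df c * (y - 0).
  by rewrite subr0 mulr_ge0 // mulr_ge0 //; have := expR_ge1Dx c; lra.
by rewrite -fyE /f expR0; lra.
Qed.

Lemma sqr_le_expR_rem_le0 (y : R) : y <= 0 ->
  y ^+ 2 <= 2 * (1 - y) * (expR y - 1 - y).
Proof.
move=> y0.
pose f (x : R) := 2 * (1 - x) * (expR x - 1 - x) - x ^+ 2.
pose df (x : R) := 2 * x * (1 - expR x).
have f'E x : is_derive x (1 : R) f (df x).
  by apply: is_derive_eq; rewrite /GRing.scale /= !mulr1 subr0 /df; lra.
have [c] := MVT_segment y0 (fun x _ => f'E x)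
  (derivable_within_continuous (fun x _ => @ex_derive _ _ _ _ _ _ _ (f'E x))).
rewrite in_itv /= => /andP[_ c0] fyE.
have : df c * (0 - y) <= 0.
  have e1 : expR c <= 1 by rewrite expR_le1.
  have : 2 * c * (1 - expR c) <= 0 by nra.
  by rewrite /df; nra.
by rewrite -fyE /f expR0; lra.
Qed.

Lemma sqr_le_expR_rem_shift (L y : R) : L <= 0 -> L <= y ->
  y ^+ 2 <= 2 * (1 - L) * (expR y - 1 - y).
Proof.
move=> L0 Ly; have := expR_ge1Dx y.
have [y0|/ltW y0] := leP 0 y.
  by have := sqr_le_expR_rem y0; nra.
by have := sqr_le_expR_rem_le0 y0; nra.
Qed.

End ExpRemainder.

Section MxTerm.
Variable R : realType.

Definition log_ratio (x p q : R) := ln x + ln p - ln q.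

Definition mx_term (x p q : R) := p * (log_ratio x p q - 1) ^+ 2.

Lemma log_ratio_le0 (x p q : R) : 0 < x -> 0 < p -> 0 < q -> x * p <= q ->
  log_ratio x p q <= 0.
Proof.
by move=> *; rewrite subr_le0 -lnM ?posrE // ler_ln ?posrE // mulr_gt0.
Qed.

(* The right-hand side is the tangent plane at (P, Q) of the 1-homogeneous map
   (p, q) |-> mx_term a p q. *)
Lemma mx_term_le_tangent (a p q P Q : R) : 0 < a -> 0 <= p -> 0 < q ->
  0 < P -> 0 < Q -> a * p <= q -> a * P <= Q ->
  mx_term a p q <= 2 * (1 - log_ratio a P Q) * P / Q * q
                   + (log_ratio a P Q ^+ 2 - 1) * p.
Proof.
move=> a_gt0 p_ge0 q_gt0 P_gt0 Q_gt0 apq aPQ.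
have := log_ratio_le0 a_gt0 P_gt0 Q_gt0 aPQ; set L := log_ratio a P Q => L_le0.
have [->|p_neq0] := eqVneq p 0.
  rewrite /mx_term !(mul0r, mulr0, addr0).
  by apply: mulr_ge0; [apply: divr_ge0; [apply: mulr_ge0; lra | lra] | lra].
have p_gt0 : 0 < p by rewrite lt_def p_neq0.
have := log_ratio_le0 a_gt0 p_gt0 q_gt0 apq; set M := log_ratio a p q => M_le0.
have qPQE : P / Q * q = p * expR (L - M).
  have -> : L - M = (ln P + ln q) - (ln Q + ln p) by rewrite /L /M /log_ratio; ring.
  by rewrite expRB !expRD !lnK ?posrE //; field; rewrite !gt_eqF.
have /(ler_wpM2l (ltW p_gt0)) :=
  @sqr_le_expR_rem_shift _ L (L - M) L_le0 ltac:(lra).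
have -> : 2 * (1 - L) * P / Q * q = 2 * (1 - L) * (p * expR (L - M)).
  by rewrite -qPQE; ring.
rewrite /mx_term -/M.
have -> : M = L - (L - M) by ring.
set y := L - M; set e := expR y; nra.
Qed.

Lemma mx_term_superadditive (a : R) n (w p q : 'I_n -> R) : 0 < a ->
  (forall i, 0 <= w i) -> (forall i, 0 <= p i) -> (forall i, 0 < q i) ->
  (forall i, a * p i <= q i) -> 0 < \sum_i w i * q i ->
  \sum_i w i * mx_term a (p i) (q i) <=
  mx_term a (\sum_i w i * p i) (\sum_i w i * q i).
Proof.
move=> a_gt0 w_ge0 p_ge0 q_gt0 apq Q_gt0.
set P := \sum_i w i * p i; set Q := \sum_i w i * q i.
have P_ge0 : 0 <= P by apply: sumr_ge0 => i _; apply: mulr_ge0.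
have aPQ : a * P <= Q.
  rewrite /P mulr_sumr; apply: ler_sum => i _.
  by have := apq i; have := w_ge0 i; nra.
have [P0|P_neq0] := eqVneq P 0.
  have wp0 i : w i * p i = 0.
    by apply: (psumr_eq0P _ P0) => // j _; apply: mulr_ge0.
  rewrite P0 /mx_term mul0r big1 // => i _.
  by rewrite mulrA wp0 mul0r.
have P_gt0 : 0 < P by rewrite lt_def P_neq0.
set L := log_ratio a P Q.
apply: (@le_trans _ _ (\sum_i w i * (2 * (1 - L) * P / Q * q i + (L ^+ 2 - 1) * p i))).
  apply: ler_sum => i _; apply: ler_wpM2l => //.
  exact: mx_term_le_tangent.
have -> : \sum_i w i * (2 * (1 - L) * P / Q * q i + (L ^+ 2 - 1) * p i) =
    2 * (1 - L) * P / Q * Q + (L ^+ 2 - 1) * P.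
  rewrite /P /Q !mulr_sumr -big_split /=.
  by apply: eq_bigr => i _; ring.
rewrite mulfVK ?gt_eqF // /mx_term -/L.
suff -> : 2 * (1 - L) * P + (L ^+ 2 - 1) * P = P * (L - 1) ^+ 2 by [].
by ring.
Qed.

Lemma mx_term_data_processing (a : R) n m (W : 'I_m -> 'I_n -> R)
    (p q : 'I_n -> R) : 0 < a ->
  (forall j i, 0 <= W j i) -> (forall i, \sum_j W j i = 1) ->
  (forall i, 0 <= p i) -> (forall i, 0 < q i) -> (forall i, a * p i <= q i) ->
  (forall j, 0 < \sum_i W j i * q i) ->
  \sum_i mx_term a (p i) (q i) <=
  \sum_j mx_term a (\sum_i W j i * p i) (\sum_i W j i * q i).
Proof.
move=> a_gt0 W_ge0 W_sum1 p_ge0 q_gt0 apq Wq_gt0.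
have -> : \sum_i mx_term a (p i) (q i) = \sum_j \sum_i W j i * mx_term a (p i) (q i).
  rewrite exchange_big /=; apply: eq_bigr => i _.
  by rewrite -mulr_suml W_sum1 mul1r.
by apply: ler_sum => j _; apply: mx_term_superadditive.
Qed.

Lemma variance_bias_sqr n (p l : 'I_n -> R) (c : R) : \sum_j p j = 1 ->
  \sum_j p j * (l j * l j) - (\sum_j p j * l j) ^+ 2 + (c - \sum_j p j * l j) ^+ 2
  = \sum_j p j * (l j - c) ^+ 2.
Proof.
move=> p_sum1.
have -> : \sum_j p j * (l j - c) ^+ 2 =
    \sum_j (p j * (l j * l j) + (-2 * c) * (p j * l j) + c ^+ 2 * p j).
  by apply: eq_bigr => j _; ring.
by rewrite !big_split /= -!mulr_sumr p_sum1; ring.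
Qed.

End MxTerm.

Local Open Scope sesquilinear_scope.

Lemma diag_mx_intertwine_map (T : idomainType) m n (g : T -> T)
    (W : 'M[T]_(m, n)) (e : 'rV_m) (d : 'rV_n) :
  diag_mx e *m W = W *m diag_mx d ->
  diag_mx (map_mx g e) *m W = W *m diag_mx (map_mx g d).
Proof.
move=> /matrixP eW; apply/matrixP => i j; have := eW i j.
rewrite !mul_diag_mx !mul_mx_diag !mxE.
have [->|Wij_neq0] := eqVneq (W i j) 0; first by rewrite !mulr0 !mul0r.
move=> eWij; have -> : e 0 i = d 0 j by apply: (mulIf Wij_neq0); rewrite eWij mulrC.
by rewrite mulrC.
Qed.

Section UnitaryDiag.
Variable R : realType.
Local Notation C := R[i].

Lemma adjE m n (A : 'M[C]_(m, n)) : adj A = A ^t*.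
Proof. by rewrite /adj map_trmx. Qed.

Lemma unitarymx_tK n (P : 'M[C]_n) : P \is unitarymx -> P ^t* *m P = 1%:M.
Proof. by move=> uP; rewrite -(invmx_unitary uP) (mulVmx (unitarymx_unit uP)). Qed.

(* Locked: otherwise unification unfolds [udiag] into matrix products and
   rewriting with the lemmas below becomes very slow. *)
Definition udiag_def n (P : 'M[C]_n) (d : 'rV[C]_n) := P ^t* *m diag_mx d *m P.
Fact udiag_key : unit. Proof. by []. Qed.
Definition udiag n := locked_with udiag_key (@udiag_def n).

Lemma udiagE n (P : 'M[C]_n) d : udiag P d = P ^t* *m diag_mx d *m P.
Proof. by rewrite /udiag unlock. Qed.

Lemma udiagM n (P : 'M[C]_n) (d e : 'rV[C]_n) : P \is unitarymx ->
  udiag P d *m udiag P e = udiag P (\row_j (d 0 j * e 0 j)).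
Proof.
move=> uP; rewrite !udiagE !mulmxA (mulmxtVK _ uP).
by rewrite -[_ *m diag_mx d *m _]mulmxA mulmx_diag.
Qed.

Lemma udiagB n (P : 'M[C]_n) (d e : 'rV[C]_n) : udiag P d - udiag P e = udiag P (d - e).
Proof. by rewrite !udiagE [diag_mx (d - e)]raddfB mulmxBr mulmxBl. Qed.

Lemma mxtrace_udiag n (P : 'M[C]_n) (d : 'rV[C]_n) : P \is unitarymx ->
  \tr (udiag P d) = \sum_j d 0 j.
Proof.
by move=> uP; rewrite !udiagE mxtrace_mulC mulmxA (unitarymxP uP) mul1mx mxtrace_diag.
Qed.

Lemma row_udiag n (P : 'M[C]_n) (d : 'rV[C]_n) i : P \is unitarymx ->
  row i P *m udiag P d = d 0 i *: row i P.
Proof.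
move=> uP; rewrite !udiagE !mulmxA -row_mul (unitarymxP uP) -row_mul mul1mx.
by rewrite row_diag_mx -scalemxAl -rowE.
Qed.

Lemma row_unitarymx_dot n (P : 'M[C]_n) i : P \is unitarymx ->
  (row i P *m (row i P)^t*) 0 0 = 1.
Proof. by move=> /row_unitarymxP/(_ i i); rewrite dotmxE eqxx. Qed.

Lemma row_unitarymx_neq0 n (P : 'M[C]_n) i : P \is unitarymx -> row i P != 0.
Proof.
move=> uP; apply/eqP => row0; have := row_unitarymx_dot i uP.
by rewrite row0 mul0mx mxE => /eqP; rewrite eq_sym oner_eq0.
Qed.

Lemma udiag_form n (P : 'M[C]_n) (d : 'rV[C]_n) i : P \is unitarymx ->
  (row i P *m udiag P d *m adj (row i P)) 0 0 = d 0 i.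
Proof.
move=> uP; rewrite (row_udiag _ _ uP) -scalemxAl mxE adjE.
by rewrite (row_unitarymx_dot _ uP) mulr1.
Qed.

Lemma hermitian_trig_udiag n (P X : 'M[C]_n) : P \is unitarymx -> adj X = X ->
  similar_trig P X -> X = udiag P (\row_j (P *m X *m P^t*) j j).
Proof.
move=> uP; rewrite adjE => hX; rewrite /similar_to (conjymx _ uP).
set D := P *m X *m P^t* => /is_trig_mxP D_trig.
have hD : D ^t* = D by rewrite /D !trmx_mul !map_mxM trmxCK hX mulmxA.
have Ddiag : D = diag_mx (\row_j D j j).
  apply/matrixP => i j; rewrite [RHS]mxE [(\row_j _) 0 i]mxE.
  case: (ltngtP i j) => [ij|ji|/val_inj ->]; last by rewrite eqxx mulr1n.
  - by rewrite D_trig // eqE /= (ltn_eqF ij).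
  - have -> : D i j = Num.conj (D j i) by rewrite -{1}hD !mxE.
    by rewrite D_trig // rmorph0 eqE /= (gtn_eqF ji).
by rewrite udiagE -Ddiag /D !mulmxA (unitarymx_tK uP) mul1mx (mulmxKtV _ uP erefl).
Qed.

Lemma commuting_hermitian_udiag n (A B : 'M[C]_n) :
  adj A = A -> adj B = B -> A *m B = B *m A ->
  exists P a b, [/\ P \is unitarymx, A = udiag P a & B = udiag P b].
Proof.
move=> hA hB AB; have [P uP /andP[tA tB]] := cotrigonalization2 AB.
exists P; do 2 eexists; split; first exact: uP.
- exact: hermitian_trig_udiag tA.
- exact: hermitian_trig_udiag tB.
Qed.

Lemma mxfun_udiag f n (P : 'M[C]_n) d : P \is unitarymx ->
  mxfun f (udiag P d) = udiag P (map_mx (fun z : C => (f (complex.Re z))%:C) d).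
Proof.
move=> uP; rewrite /mxfun; set g := fun z : C => _.
have uU := spectral_unitarymx (udiag P d).
have /orthomx_spectralP AE : udiag P d \is normalmx.
  apply/orthomx_spectral_subproof; exists (P, d); first exact: uP.
  by rewrite /= (invmx_unitary uP) udiagE.
move: (spectralmx _) (spectral_diag _) uU AE => U e uU AE.
have UA : U *m udiag P d = diag_mx e *m U.
  by rewrite AE !mulmxA (mulmxV (unitarymx_unit uU)) mul1mx.
have UPt : diag_mx e *m (U *m P^t*) = (U *m P^t*) *m diag_mx d.
  by rewrite mulmxA -UA udiagE !mulmxA (mulmxtVK _ uP).
rewrite -[X in _ *m X = _](mulmxKtV U uP erefl) mulmxA.
rewrite -[invmx U *m _ *m (U *m P^t*)]mulmxA (diag_mx_intertwine_map _ UPt).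
by rewrite mulmxA mulmxA (mulVmx (unitarymx_unit uU)) mul1mx udiagE.
Qed.

Lemma eigenvalue_udiag n (P : 'M[C]_n) d i : P \is unitarymx ->
  eigenvalue (udiag P d) (d 0 i).
Proof.
move=> uP; apply/eigenvalueP; exists (row i P); first exact: row_udiag.
exact: row_unitarymx_neq0.
Qed.

Lemma eigenvalue_udiagP n (P : 'M[C]_n) d s : P \is unitarymx ->
  eigenvalue (udiag P d) s -> exists i, s = d 0 i.
Proof.
move=> uP /eigenvalueP [v vA v_neq0].
have w_neq0 : v *m P^t* != 0.
  by apply: contraNneq v_neq0 => w0; rewrite -(mulmxKtV v uP erefl) w0 mul0mx.
have [j wj_neq0] : exists j, (v *m P^t*) 0 j != 0.
  apply/existsP; move: w_neq0; apply: contraNT => /existsPn w0.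
  by apply/eqP/rowP => j; have /negPn/eqP -> := w0 j; rewrite mxE.
have wd : v *m P^t* *m diag_mx d = s *: (v *m P^t*).
  by rewrite scalemxAl -vA !udiagE !mulmxA (mulmxtVK _ uP).
exists j; move/rowP: wd => /(_ j); rewrite mul_mx_diag [LHS]mxE [RHS]mxE => wdj.
by apply: (mulIf wj_neq0); rewrite -wdj mulrC.
Qed.

Lemma udiag_unit_neq0 n (P : 'M[C]_n) d i : P \is unitarymx ->
  udiag P d \in unitmx -> d 0 i != 0.
Proof.
move=> uP d_unit; apply: contra (row_unitarymx_neq0 i uP) => /eqP di0.
by rewrite -[row i P](mulmxK d_unit) (row_udiag _ _ uP) di0 scale0r mul0mx.
Qed.

End UnitaryDiag.

Section KrausWeight.
Variable R : realType.
Local Notation C := R[i].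

Definition sqr_modulus (z : C) : R := complex.Re z ^+ 2 + complex.Im z ^+ 2.

Lemma mulC_conj (z : C) : z * Num.conj z = (sqr_modulus z)%:C.
Proof. by rewrite /sqr_modulus add_Re2_Im2 normCK. Qed.

Lemma sqr_modulus_ge0 (z : C) : 0 <= sqr_modulus z.
Proof. by rewrite addr_ge0 // sqr_ge0. Qed.

Lemma mul_diag_mx_adj_entry m n (B : 'M[C]_(m, n)) (d : 'rV[C]_n) j :
  (B *m diag_mx d *m B^t*) j j = \sum_i (sqr_modulus (B j i))%:C * d 0 i.
Proof.
rewrite mxE; apply: eq_bigr => i _.
by rewrite mul_mx_diag !mxE -mulC_conj mulrAC.
Qed.

Lemma mul_adj_entry m n (B : 'M[C]_(m, n)) i :
  (B^t* *m B) i i = \sum_j (sqr_modulus (B j i))%:C.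
Proof. by rewrite mxE; apply: eq_bigr => j _; rewrite !mxE mulrC mulC_conj. Qed.

Definition kraus_weight n m (Ks : seq 'M[C]_(m, n)) (P : 'M[C]_n) (Q : 'M[C]_m) j i :=
  \sum_(K <- Ks) sqr_modulus ((Q *m K *m P^t*) j i).

Lemma kraus_weight_ge0 n m (Ks : seq 'M[C]_(m, n)) P Q j i :
  0 <= kraus_weight Ks P Q j i.
Proof. by apply: sumr_ge0 => K _; apply: sqr_modulus_ge0. Qed.

Lemma kraus_weight_sum1 n m (Ks : seq 'M[C]_(m, n)) P Q i :
  P \is unitarymx -> Q \is unitarymx -> is_kraus Ks ->
  \sum_j kraus_weight Ks P Q j i = 1.
Proof.
move=> uP uQ Ks_tp.
have : \sum_(K <- Ks) (Q *m K *m P^t*)^t* *m (Q *m K *m P^t*) = 1%:M.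
  rewrite -(unitarymxP uP) -[P in P *m _]mulmx1 -Ks_tp mulmx_sumr mulmx_suml.
  apply: eq_bigr => K _; rewrite adjE !trmx_mul !map_mxM trmxCK !mulmxA.
  by rewrite (mulmxKtV _ uQ erefl).
move/matrixP/(_ i i); rewrite summxE mxE eqxx mulr1n.
under eq_bigr do rewrite mul_adj_entry.
rewrite exchange_big /= => sum1.
apply: (@complexI R); rewrite rmorph_sum rmorph1 -sum1; apply: eq_bigr => j _.
by rewrite rmorph_sum.
Qed.

End KrausWeight.

Section SpectralReduction.
Variable R : realType.
Local Notation C := R[i].

Definition real_row n (p : 'I_n -> R) : 'rV[C]_n := \row_j (p j)%:C.

Definition distribution n (p : 'I_n -> R) := (forall i, 0 <= p i) /\ \sum_i p i = 1.

Lemma distribution_le1 n (p : 'I_n -> R) i : distribution p -> p i <= 1.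
Proof.
move=> [p_ge0 <-]; rewrite (bigD1 i) //= lerDl.
by apply: sumr_ge0 => j _; apply: p_ge0.
Qed.

Lemma state_udiag n (P : 'M[C]_n) d : P \is unitarymx -> is_state (udiag P d) ->
  exists2 p, d = real_row p & distribution p.
Proof.
move=> uP [[_ d_psd] d_tr1].
have d_ge0 j : 0 <= d 0 j by rewrite -(udiag_form d j uP); apply: d_psd.
have dE : d = real_row (fun j => complex.Re (d 0 j)).
  apply/rowP => j; rewrite mxE; move: (d_ge0 j).
  by case: (d 0 j) => x y; rewrite lecE /= => /andP[/eqP -> _].
exists (fun j => complex.Re (d 0 j)); first exact: dE.
split.
  by move=> j; move: (d_ge0 j); rewrite lecE => /andP[].
move: d_tr1; rewrite (mxtrace_udiag _ uP) {1}dE.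
by under eq_bigr do rewrite mxE; rewrite -rmorph_sum => -[].
Qed.

Lemma commuting_states_udiag n (A B : 'M[C]_n) :
  is_state A -> is_state B -> mxcommute A B ->
  exists P p q, [/\ P \is unitarymx, A = udiag P (real_row p),
    B = udiag P (real_row q), distribution p & distribution q].
Proof.
move=> A_st B_st AB.
have [P [a [b [uP AE BE]]]] := commuting_hermitian_udiag A_st.1.1 B_st.1.1 AB.
rewrite {}AE {}BE in A_st B_st *.
have [p -> p_distr] := state_udiag uP A_st.
have [q -> q_distr] := state_udiag uP B_st.
by exists P, p, q.
Qed.

Lemma udiag_real_rowM n (P : 'M[C]_n) (u v : 'I_n -> R) : P \is unitarymx ->
  udiag P (real_row u) *m udiag P (real_row v) = udiag P (real_row (fun j => u j * v j)).
Proof.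
move=> uP; rewrite (udiagM _ _ uP); congr udiag.
by apply/rowP => j; rewrite !mxE rmorphM.
Qed.

Lemma udiag_real_rowB n (P : 'M[C]_n) (u v : 'I_n -> R) :
  udiag P (real_row u) - udiag P (real_row v) = udiag P (real_row (fun j => u j - v j)).
Proof. by rewrite udiagB; congr udiag; apply/rowP => j; rewrite !mxE rmorphB. Qed.

Lemma mxtrace_udiag_real_row n (P : 'M[C]_n) (u : 'I_n -> R) : P \is unitarymx ->
  complex.Re (\tr (udiag P (real_row u))) = \sum_j u j.
Proof.
move=> uP; rewrite (mxtrace_udiag _ uP).
by under eq_bigr do rewrite mxE; rewrite -rmorph_sum.
Qed.

Lemma logm_udiag n (P : 'M[C]_n) (u : 'I_n -> R) : P \is unitarymx ->
  logm (udiag P (real_row u)) = udiag P (real_row (fun j => log2 (u j))).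
Proof.
move=> uP; rewrite /logm (mxfun_udiag _ _ uP); congr udiag.
by apply/rowP => j; rewrite !mxE.
Qed.

Lemma Mx_udiag n (P : 'M[C]_n) (p q : 'I_n -> R) x : P \is unitarymx ->
  \sum_j p j = 1 ->
  Mx x (udiag P (real_row p)) (udiag P (real_row q)) =
  (\sum_j mx_term x (p j) (q j)) / (ln 2) ^+ 2.
Proof.
move=> uP p_sum1.
rewrite /Mx /relvar /relent !(logm_udiag _ uP) udiag_real_rowB /=.
rewrite !(udiag_real_rowM _ _ uP) !(mxtrace_udiag_real_row _ uP).
rewrite (variance_bias_sqr _ _ p_sum1).
rewrite mulr_suml; apply: eq_bigr => j _; rewrite /mx_term /log_ratio /log2.
have : ln (2 : R) != 0 by rewrite gt_eqF // ln_gt0 // ltr1n.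
by move: (ln (2 : R)) => t t_neq0; field.
Qed.

Lemma full_rank_udiag_gt0 n (P : 'M[C]_n) (q : 'I_n -> R) : P \is unitarymx ->
  full_rank (udiag P (real_row q)) -> (forall j, 0 <= q j) -> forall j, 0 < q j.
Proof.
move=> uP q_fr q_ge0 j; rewrite lt_def q_ge0 andbT.
have q_unit : udiag P (real_row q) \in unitmx by rewrite -row_free_unit; apply/eqP.
by have := udiag_unit_neq0 j uP q_unit; rewrite mxE fmorph_eq0.
Qed.

Lemma min_eigenvalue_udiag n (P : 'M[C]_n) (q : 'I_n -> R) s : P \is unitarymx ->
  min_eigenvalue (udiag P (real_row q)) s -> (forall j, 0 < q j) ->
  0 < s /\ forall j, s <= q j.
Proof.
move=> uP [s_eig s_min] q_gt0; split.
  have [k] := eigenvalue_udiagP uP s_eig.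
  by rewrite mxE => -[->].
by move=> j; have := s_min _ (eigenvalue_udiag (real_row q) j uP); rewrite mxE lecR.
Qed.

Lemma kraus_channel_udiag n m (Ks : seq 'M[C]_(m, n)) (P : 'M[C]_n) (Q : 'M[C]_m)
    (p : 'I_n -> R) (p' : 'I_m -> R) : P \is unitarymx -> Q \is unitarymx ->
  kraus_channel Ks (udiag P (real_row p)) = udiag Q (real_row p') ->
  forall j, p' j = \sum_i kraus_weight Ks P Q j i * p i.
Proof.
move=> uP uQ KsE j.
have : Q *m kraus_channel Ks (udiag P (real_row p)) *m Q^t* = diag_mx (real_row p').
  by rewrite KsE !udiagE !mulmxA (unitarymxP uQ) mul1mx (mulmxtVK _ uQ).
rewrite /kraus_channel mulmx_sumr mulmx_suml.
have -> : \sum_(K <- Ks) Q *m (K *m udiag P (real_row p) *m adj K) *m Q^t* =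
    \sum_(K <- Ks) (Q *m K *m P^t*) *m diag_mx (real_row p) *m (Q *m K *m P^t*)^t*.
  by apply: eq_bigr => K _; rewrite adjE !udiagE !trmx_mul !map_mxM trmxCK !mulmxA.
move/matrixP/(_ j j); rewrite summxE mxE eqxx mulr1n.
under eq_bigr do rewrite mul_diag_mx_adj_entry.
rewrite exchange_big /= mxE => p'E.
apply: (@complexI R); rewrite -p'E rmorph_sum; apply: eq_bigr => i _.
by rewrite -mulr_suml mxE rmorphM rmorph_sum.
Qed.

End SpectralReduction.

Theorem theorem12 (R : realType) (n m : nat)
  (rho sigma : 'M[R[i]]_n) (rho' sigma' : 'M[R[i]]_m) (smin : R) :
  is_state rho -> is_state sigma -> mxcommute rho sigma -> full_rank sigma ->
  is_state rho' -> is_state sigma' -> mxcommute rho' sigma' -> full_rank sigma' ->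
  min_eigenvalue sigma smin ->
  majorizes rho sigma rho' sigma' ->
  Mx smin rho' sigma' >= Mx smin rho sigma.
Proof.
move=> rho_st sigma_st rs_comm sigma_fr rho'_st sigma'_st rs'_comm sigma'_fr smin_min.
have [P [p [q [uP rhoE sigmaE p_distr [q_ge0 _]]]]] :=
  commuting_states_udiag rho_st sigma_st rs_comm.
have [Q [p' [q' [uQ rho'E sigma'E [_ p'_sum1] [q'_ge0 _]]]]] :=
  commuting_states_udiag rho'_st sigma'_st rs'_comm.
subst rho sigma rho' sigma' => -[Ks [Ks_tp [rhoE' sigmaE']]].
have q_gt0 := full_rank_udiag_gt0 uP sigma_fr q_ge0.
have q'_gt0 := full_rank_udiag_gt0 uQ sigma'_fr q'_ge0.
have [smin_gt0 smin_le] := min_eigenvalue_udiag uP smin_min q_gt0.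
have p'E := kraus_channel_udiag uP uQ rhoE'.
have q'E := kraus_channel_udiag uP uQ sigmaE'.
rewrite (Mx_udiag _ _ uP p_distr.2) (Mx_udiag _ _ uQ p'_sum1).
apply: ler_wpM2r; first by rewrite invr_ge0 sqr_ge0.
under [X in _ <= X]eq_bigr do rewrite p'E q'E.
apply: (mx_term_data_processing (W := kraus_weight Ks P Q)).
- exact: smin_gt0.
- exact: kraus_weight_ge0.
- by move=> i; apply: kraus_weight_sum1.
- exact: p_distr.1.
- exact: q_gt0.
- move=> i; apply: le_trans (smin_le i); apply: ler_piMr; first exact: ltW.
  exact: distribution_le1.
- by move=> j; have := q'_gt0 j; rewrite q'E.
Qed.
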